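(* Let $h\in\mathcal H$, $d=\operatorname{hdepth}(h)$, $k_0=k_0(h)$ and $h_0=h(k_0)$. Then for every integer $k$ with $k_0\le k\le d$ we have $h(k)\ge \binom{d-k_0}{k-k_0}h_0$.
   Context: $\mathcal H$ denotes the set of nonzero functions $h:\mathbb Z\to\mathbb Z_{\ge 0}$ such that $h(j)=0$ for all sufficiently negative $j$. For $h\in\mathcal H$ and integers $k\le d$, set $\beta_k^d(h)=\sum_{j\le k}(-1)^{k-j}\binom{d-j}{k-j}h(j)$, and $\operatorname{hdepth}(h)=\max\{d\in\mathbb Z:\ \beta_k^d(h)\ge 0\text{ for all integers }k\le d\}$. Also $k_0(h)=\min\{j: h(j)>0\}$. *)

From Stdlib Require Import ClassicalEpsilon.
From mathcomp Require Import all_boot all_order all_algebra.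
Set Implicit Arguments. Unset Strict Implicit. Unset Printing Implicit Defensive.
Import Order.TTheory GRing.Theory Num.Theory.
Local Open Scope ring_scope.

Definition eventually_zero_neg (h : int -> nat) : Prop :=
  exists N : int, forall j : int, j < N -> h j = 0%N.

Definition inH (h : int -> nat) : Prop :=
  (exists j : int, h j <> 0%N) /\ eventually_zero_neg h.

(* a (classically chosen) bound below which h vanishes, if any *)
Definition lowbd (h : int -> nat) : int :=
  epsilon (inhabits 0) (fun N : int => forall j : int, j < N -> h j = 0%N).

(* beta_k^d(h) = sum_{j <= k} (-1)^(k-j) C(d-j, k-j) h(j); the terms with
   j < lowbd h vanish (for h in H), so the sum is the finite sum over
   lowbd h <= j <= k. *)
Definition beta (h : int -> nat) (k d : int) : int :=
  if lowbd h <= k then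
    \sum_(i < (absz (k - lowbd h)).+1)
       let j := lowbd h + i%:Z in
       (-1) ^+ (absz (k - j)) * ('C(absz (d - j), absz (k - j)))%:Z * (h j)%:Z
  else 0.

Definition hdepth_ok (h : int -> nat) (d : int) : Prop :=
  forall k : int, k <= d -> 0 <= beta h k d.

Definition is_hdepth (h : int -> nat) (d : int) : Prop :=
  hdepth_ok h d /\ forall d' : int, hdepth_ok h d' -> d' <= d.

Definition is_k0 (h : int -> nat) (k0 : int) : Prop :=
  (0 < h k0)%N /\ forall j : int, (0 < h j)%N -> k0 <= j.

(* Shifting indices so that the summation in beta starts at L = lowbd h, the
   numbers b_m = beta_{L+m}^{L+D}(h) are the "beta transform" of the sequence
   a_i = h(L+i):   b_m = sum_{l<=m} (-1)^(m-l) C(D-l, m-l) a_l.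
   This transform is inverted by   a_n = sum_{m<=n} C(D-m, n-m) b_m,
   because the composite kernel sum_{l<=m<=n} C(D-m,n-m)(-1)^(m-l)C(D-l,m-l)
   collapses, via C(A-i,N-i) C(A,i) = C(A,N) C(N,i), to an alternating sum of
   binomial coefficients, i.e. to [l = n].
   If d = L + D is the depth, every b_m is nonnegative; if moreover a vanishes
   below m0 = k0 - L, then b_{m0} = a_{m0}, so keeping only the m = m0 term of
   the inversion formula gives a_n >= C(D-m0, n-m0) a_{m0}, which is the claim. *)

From Stdlib Require Import ClassicalEpsilon.
From mathcomp Require Import all_boot all_order all_algebra.
Import Order.TTheory GRing.Theory Num.Theory.
From mathcomp Require Import zify ring.

(* Choosing an N-subset of an A-set and then an i-subset of it is the same as
   choosing the i-subset first and then the remaining N-i elements. *)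
Lemma bin_subset_chain (A N i : nat) : i <= N ->
  'C(A - i, N - i) * 'C(A, i) = 'C(A, N) * 'C(N, i).
Proof.
move=> iN; have [NA|AN] := leqP N A; last first.
  rewrite [in RHS]bin_small // mul0n; have [iA|Ai] := leqP i A.
    by rewrite bin_small ?mul0n //; lia.
  by rewrite (bin_small Ai) muln0.
have NiAi : N - i <= A - i by rewrite leq_sub2r.
have fA := bin_fact (leq_trans iN NA); have fAi := bin_fact NiAi.
have fN := bin_fact NA; have fNi := bin_fact iN.
rewrite (_ : A - i - (N - i) = A - N) in fAi; last by lia.
apply/eqP; rewrite -(eqn_pmul2r (_ : 0 < i`! * (N - i)`! * (A - N)`!)); last first.
  by rewrite !muln_gt0 !fact_gt0.
apply/eqP; transitivity A`!; first by rewrite -fA -fAi; ring.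
by rewrite -fN -fNi; ring.
Qed.

Local Open Scope ring_scope.

Section BinomialInversion.
Context {R : comPzRingType}.

Definition beta_seq (D : nat) (a : nat -> R) (m : nat) : R :=
  \sum_(0 <= l < m.+1) (-1) ^+ (m - l) * 'C(D - l, m - l)%:R * a l.

Lemma inversion_kernel (D l n : nat) : (l <= n)%N ->
  \sum_(l <= m < n.+1) 'C(D - m, n - m)%:R * ((-1) ^+ (m - l) * 'C(D - l, m - l)%:R)
    = (l == n)%:R :> R.
Proof.
move=> ln; rewrite -{1}[l]add0n big_addn big_mkord subSn //.
transitivity (\sum_(i < (n - l).+1) 'C(D - l, n - l)%:R * ((-1) ^+ i *+ 'C(n - l, i)) : R).
  apply: eq_bigr => i _; have iN : (i <= n - l)%N by rewrite -ltnS.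
  have chain := congr1 (GRing.natmul (1 : R)) (@bin_subset_chain (D - l) _ _ iN).
  rewrite !natrM in chain; rewrite addnK !(addnC i) !subnDA -mulr_natr.
  transitivity ((-1) ^+ i * ('C(D - l - i, n - l - i)%:R * 'C(D - l, i)%:R) : R).
    by ring.
  by rewrite chain; ring.
rewrite -mulr_sumr -exprD1n addNr expr0n subn_eq0.
have [nl|lt_ln] := leqP n l; last by rewrite mulr0 ltn_eqF.
have -> : l = n by apply/eqP; rewrite eqn_leq ln nl.
by rewrite subnn bin0 eqxx mulr1.
Qed.

Lemma beta_seq_inversion (D : nat) (a : nat -> R) (n : nat) :
  a n = \sum_(0 <= m < n.+1) 'C(D - m, n - m)%:R * beta_seq D a m.
Proof.
transitivity (\sum_(0 <= l < n.+1) (l == n)%:R * a l).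
  rewrite big_nat_recr //= eqxx mul1r big_nat big1 ?add0r // => l /andP[_ ln].
  by rewrite ltn_eqF ?mul0r.
under [RHS]eq_big_nat => m /andP[_ mn] do
  rewrite /beta_seq mulr_sumr (big_nat_widen _ _ _ _ _ mn).
rewrite (exchange_big_dep_nat xpredT) //=.
apply: eq_big_nat => l /andP[_ ln].
rewrite (eq_bigl (fun i => true && (l <= i)%N)) // -big_nat_widenl //.
rewrite -(inversion_kernel D) // mulr_suml; apply: eq_big_nat => m _; ring.
Qed.

Lemma beta_seq_leading (D : nat) (a : nat -> R) (m0 : nat) :
  (forall l, (l < m0)%N -> a l = 0) -> beta_seq D a m0 = a m0.
Proof.
move=> a_lt; rewrite /beta_seq big_nat_recr //= subnn bin0 expr0 !mul1r.
by rewrite big_nat big1 ?add0r // => l /andP[_ lm0]; rewrite a_lt ?mulr0.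
Qed.

End BinomialInversion.

Lemma lower_bound_from_beta (R : numDomainType) (D n m0 : nat) (a : nat -> R) :
  (m0 <= n)%N -> (forall l, (l < m0)%N -> a l = 0) ->
  (forall m, (m <= n)%N -> 0 <= beta_seq D a m) ->
  'C(D - m0, n - m0)%:R * a m0 <= a n.
Proof.
move=> m0n a_lt beta_ge0.
have m0_in : m0 \in index_iota 0 n.+1 by rewrite mem_index_iota.
rewrite [a n](beta_seq_inversion D) (bigD1_seq m0) ?iota_uniq //= beta_seq_leading //.
rewrite lerDl big_seq_cond; apply: sumr_ge0 => m /andP[m_in _].
rewrite mulr_ge0 ?ler0n // beta_ge0 //; move: m_in; rewrite mem_index_iota; lia.
Qed.

Lemma lowbd_vanish (h : int -> nat) : inH h -> forall j, j < lowbd h -> h j = 0%N.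
Proof. by move=> [_ ev]; exact: (epsilon_spec _ _ ev). Qed.

Lemma beta_shift (h : int -> nat) (D m : nat) : (m <= D)%N ->
  beta h (lowbd h + m%:Z) (lowbd h + D%:Z) = beta_seq D (fun i => (h (lowbd h + i%:Z))%:Z) m.
Proof.
move=> mD; rewrite /beta /beta_seq big_mkord; set L := lowbd h.
have -> : (L <= L + m%:Z) = true by lia.
have -> : absz (L + m%:Z - L)%R = m by lia.
apply: eq_bigr => l _; have lm : (l <= m)%N by rewrite -ltnS.
have -> : absz (L + m%:Z - (L + l%:Z))%R = (m - l)%N by lia.
have -> : absz (L + D%:Z - (L + l%:Z))%R = (D - l)%N by lia.
by rewrite natz.
Qed.

Theorem proposition1p7 (h : int -> nat) (d k0 : int) :
  inH h -> is_hdepth h d -> is_k0 h k0 ->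
  forall k : int, k0 <= k -> k <= d ->
    ('C(absz (d - k0), absz (k - k0)) * h k0 <= h k)%N.
Proof.
move=> hH [depth_ok _] [h_k0 k0_min] k k0k kd; set L := lowbd h.
have L_k0 : L <= k0.
  by rewrite leNgt; apply/negP => /(lowbd_vanish _ hH) h0; rewrite h0 in h_k0.
pose m0 := absz (k0 - L)%R; pose n := absz (k - L)%R; pose D := absz (d - L)%R.
have ek0 : k0 = L + m0%:Z by rewrite /m0; lia.
have ek : k = L + n%:Z by rewrite /n; lia.
have ed : d = L + D%:Z by rewrite /D; lia.
pose a i : int := (h (L + i%:Z))%:Z.
have bound : 'C(D - m0, n - m0)%:R * a m0 <= a n.
  apply: lower_bound_from_beta.
  - by lia.
  - move=> l lt_l_m0; rewrite /a.
    by case: (posnP (h (L + l%:Z))) => [-> // | /k0_min]; lia.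
  - move=> m mn; rewrite -beta_shift; last by lia.
    by rewrite -ed; apply: depth_ok; lia.
have -> : absz (d - k0)%R = (D - m0)%N by lia.
have -> : absz (k - k0)%R = (n - m0)%N by lia.
by rewrite -lez_nat PoszM -natz ek0 ek; exact: bound.
Qed.
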